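(* Let $\Gamma$ be a Fuchsian group, viewed through its preimage in $\operatorname{SL}(2,\mathbb{R})$, and let $\beta\in\mathbb{R}\setminus\{0\}$ be such that $\Gamma$ contains $\Gamma_\infty=\left\{\pm\begin{pmatrix}1&k\\0&1\end{pmatrix}:k\in\mathbb{Z}\right\}$ and $\Gamma_0=\left\{\pm\begin{pmatrix}1&0\\k\beta^2&1\end{pmatrix}:k\in\mathbb{Z}\right\}$, where $\Gamma_\infty$ is the full stabilizer of $\infty$ in $\Gamma$ and $\Gamma_0$ the full stabilizer of $0$. If $\#\{\mathrm{Tr}(\Gamma)\cap[-n,n]\}=o(n\log n)$, then $A^2\in\operatorname{PSL}(2,\mathbb{Q})$ for every $A\in\Gamma$ (i.e. $\pm A^2$ has rational entries).
   Context: $\mathrm{Tr}(\Gamma)$ is the set of traces of all lifts to $\operatorname{SL}(2,\mathbb{R})$ of elements of $\Gamma$. $f=o(g)$ means $f(n)/g(n)\to0$. *)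

From Stdlib Require Import Reals Ensembles Finite_sets ZArith.
From Coquelicot Require Import Coquelicot.
Open Scope R_scope.

(* 2x2 real matrices [[ma, mb], [mc, md]] *)
Record Mat2 := mk2 { ma : R; mb : R; mc : R; md : R }.

Definition mmul (A B : Mat2) : Mat2 :=
  mk2 (ma A * ma B + mb A * mc B) (ma A * mb B + mb A * md B)
      (mc A * ma B + md A * mc B) (mc A * mb B + md A * md B).
Definition mdet (A : Mat2) : R := ma A * md A - mb A * mc A.
Definition mtr (A : Mat2) : R := ma A + md A.
Definition mopp (A : Mat2) : Mat2 := mk2 (- ma A) (- mb A) (- mc A) (- md A).
Definition mid : Mat2 := mk2 1 0 0 1.
(* inverse of a determinant-one matrix *)
Definition minv (A : Mat2) : Mat2 := mk2 (md A) (- mb A) (- mc A) (ma A).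

(* A Fuchsian group, viewed through its full preimage in SL(2,R):
   a subgroup of SL(2,R) containing -I, which is discrete
   (the identity is isolated). *)
Definition fuchsian_preimage (G : Mat2 -> Prop) : Prop :=
  (forall g, G g -> mdet g = 1) /\
  G mid /\
  (forall g h, G g -> G h -> G (mmul g h)) /\
  (forall g, G g -> G (minv g)) /\
  G (mopp mid) /\
  (exists eps, eps > 0 /\ forall g, G g ->
      Rabs (ma g - 1) < eps -> Rabs (mb g) < eps ->
      Rabs (mc g) < eps -> Rabs (md g - 1) < eps -> g = mid).

(* Moebius action z |-> (az+b)/(cz+d): g fixes infinity iff c = 0,
   g fixes 0 iff b = 0. *)
Definition fixes_inf (g : Mat2) : Prop := mc g = 0.
Definition fixes_zero (g : Mat2) : Prop := mb g = 0.

Definition Gamma_inf (g : Mat2) : Prop :=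
  exists k : Z, g = mk2 1 (IZR k) 0 1 \/ g = mopp (mk2 1 (IZR k) 0 1).
Definition Gamma_zero (beta : R) (g : Mat2) : Prop :=
  exists k : Z, g = mk2 1 0 (IZR k * beta ^ 2) 1 \/
                g = mopp (mk2 1 0 (IZR k * beta ^ 2) 1).

Definition TrSet (G : Mat2 -> Prop) : Ensemble R :=
  fun t => exists g, G g /\ t = mtr g.

Definition trace_window (G : Mat2 -> Prop) (n : nat) : Ensemble R :=
  fun t => TrSet G t /\ - INR n <= t <= INR n.

Definition is_rational (x : R) : Prop :=
  exists p q : Z, q <> 0%Z /\ x = IZR p / IZR q.

Definition rational_mat (A : Mat2) : Prop :=
  is_rational (ma A) /\ is_rational (mb A) /\
  is_rational (mc A) /\ is_rational (md A).

(* Let T and L be the unipotent generators of the two cusp stabilisers, with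
   lower-left entry x = beta^2 for L, and let A = [[a, b], [c, d]] be in the
   group with a <> 0.  For fixed m, the traces of T^k L^m A form the arithmetic
   progression s_m + k (c + m x a), k in Z.  If c / (x a) were irrational, two
   of these progressions would share at most one point, so the first M of them
   would put a constant times n log M distinct traces in [-n, n], up to M^2
   coincidences; at n = M^2 this contradicts the o(n log n) hypothesis.  Hence
   c / (x a) is rational, and likewise b / a (using L^k A T^m).  Applied to T L
   this gives x rational, and applied to A L^m it gives d / a rational.  So A is
   a times a rational matrix with a^2 = 1 / det rational, and A^2 is rational;
   the case a = 0 reduces to T A. *)

From Stdlib Require Import Reals Ensembles Finite_sets ZArith.
From Coquelicot Require Import Coquelicot.
From Stdlib Require Import Finite_sets_facts List Lra Lia Classical.
Open Scope R_scope.

Lemma rat_IZR (z : Z) : is_rational (IZR z).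
Proof. exists z, 1%Z; split; [lia|simpl; field]. Qed.

Lemma rat_add (a b : R) : is_rational a -> is_rational b -> is_rational (a + b).
Proof.
  intros [p1 [q1 [Hq1 ->]]] [p2 [q2 [Hq2 ->]]].
  exists (p1 * q2 + p2 * q1)%Z, (q1 * q2)%Z; split; [lia|].
  rewrite plus_IZR, !mult_IZR; field; split; apply not_0_IZR; assumption.
Qed.

Lemma rat_mul (a b : R) : is_rational a -> is_rational b -> is_rational (a * b).
Proof.
  intros [p1 [q1 [Hq1 ->]]] [p2 [q2 [Hq2 ->]]].
  exists (p1 * p2)%Z, (q1 * q2)%Z; split; [lia|].
  rewrite !mult_IZR; field; split; apply not_0_IZR; assumption.
Qed.

Lemma rat_opp (a : R) : is_rational a -> is_rational (- a).
Proof.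
  intros Ha; replace (- a) with (IZR (-1) * a) by (simpl; ring).
  apply rat_mul; [apply rat_IZR|exact Ha].
Qed.

Lemma rat_sub (a b : R) : is_rational a -> is_rational b -> is_rational (a - b).
Proof. intros Ha Hb; apply rat_add; [exact Ha|apply rat_opp, Hb]. Qed.

(* No side condition: [/ 0 = 0] in Stdlib. *)
Lemma rat_inv (a : R) : is_rational a -> is_rational (/ a).
Proof.
  intros [p [q [Hq ->]]].
  destruct (Z.eq_dec p 0) as [->|Hp].
  - exists 0%Z, 1%Z; split; [lia|unfold Rdiv; rewrite Rmult_0_l, Rinv_0; ring].
  - exists q, p; split; [exact Hp|field; split; apply not_0_IZR; assumption].
Qed.

Lemma rat_div (a b : R) : is_rational a -> is_rational b -> is_rational (a / b).
Proof. intros Ha Hb; apply rat_mul; [exact Ha|apply rat_inv, Hb]. Qed.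

Section Counting.
Variables (A : Type) (eq_dec : forall x y : A, {x = y} + {x <> y}).

Lemma NoDup_length_le_cardinal (E : Ensemble A) (N : nat) (l : list A) :
  cardinal A E N -> NoDup l -> (forall x, List.In x l -> E x) -> (length l <= N)%nat.
Proof.
  revert E N; induction l as [|x l IH]; intros E N HE Hl Hin; simpl; [lia|].
  inversion_clear Hl as [|? ? Hx Hl'].
  assert (HxE : Ensembles.In A E x) by (apply Hin; left; reflexivity).
  assert (HN : (N > 0)%nat) by (apply (inh_card_gt_O _ E); [exists x|]; assumption).
  enough (length l <= Nat.pred N)%nat by lia.
  apply (IH _ _ (card_soustr_1 _ _ _ HE x HxE) Hl').
  intros y Hy; split; [apply Hin; right; exact Hy|].
  intros Hyx; inversion Hyx; subst; contradiction.
Qed.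

(* Pigeonhole: sending each element to its least witness is injective. *)
Lemma NoDup_length_le_witnesses (P : nat -> A -> Prop)
    (P_dec : forall m x, {P m x} + {~ P m x}) (M : nat) (B : list A) :
  NoDup B ->
  (forall x, List.In x B -> exists m, (m < M)%nat /\ P m x) ->
  (forall m x y, (m < M)%nat -> List.In x B -> List.In y B -> P m x -> P m y -> x = y) ->
  (length B <= M)%nat.
Proof.
  intros HB Hwit Hinj.
  set (w x := find (fun m => if P_dec m x then true else false) (seq 0 M)).
  assert (w_spec : forall x, List.In x B -> exists m, w x = Some m /\ (m < M)%nat /\ P m x).
  { intros x Hx; unfold w.
    destruct (find _ _) as [m|] eqn:Hf.
    - apply find_some in Hf as [Hm Hp]; apply in_seq in Hm.
      destruct (P_dec m x); [|discriminate]. exists m; repeat split; lia || assumption.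
    - destruct (Hwit x Hx) as [m [HmM Hm]].
      assert (Hm' := find_none _ _ Hf m ltac:(apply in_seq; lia)).
      simpl in Hm'; destruct (P_dec m x); [discriminate|contradiction]. }
  rewrite <- (length_map w B), <- (length_seq M 0), <- (length_map Some (seq 0 M)).
  apply NoDup_incl_length.
  - apply NoDup_map_NoDup_ForallPairs; [|exact HB].
    intros x y Hx Hy Hxy.
    destruct (w_spec x Hx) as [m [Ex [HmM Hmx]]], (w_spec y Hy) as [m' [Ey [_ Hmy]]].
    rewrite Ex, Ey in Hxy; injection Hxy as <-.
    exact (Hinj m x y HmM Hx Hy Hmx Hmy).
  - intros z Hz; apply in_map_iff in Hz as [x [<- Hx]].
    destruct (w_spec x Hx) as [m [-> [HmM _]]].
    apply in_map, in_seq; lia.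
Qed.

Definition memb (x : A) (L : list A) : bool := if in_dec eq_dec x L then true else false.

Lemma memb_true x L : memb x L = true <-> List.In x L.
Proof. unfold memb; destruct (in_dec eq_dec x L); split; congruence || tauto. Qed.

Variable l : nat -> list A.
Hypothesis l_NoDup : forall m, NoDup (l m).
Hypothesis l_meet_once : forall m m' x y, m <> m' ->
  List.In x (l m) -> List.In x (l m') -> List.In y (l m) -> List.In y (l m') -> x = y.

Fixpoint union_upto (M : nat) : list A :=
  match M with
  | O => nil
  | S M => union_upto M ++ filter (fun x => negb (memb x (union_upto M))) (l M)
  end.

Lemma In_union_upto M x : List.In x (union_upto M) -> exists m, (m < M)%nat /\ List.In x (l m).
Proof.
  induction M as [|M IH]; simpl; [tauto|].
  intros [Hx|Hx]%in_app_or.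
  - destruct (IH Hx) as [m [HmM Hm]]; exists m; split; [lia|exact Hm].
  - apply filter_In in Hx; exists M; split; [lia|tauto].
Qed.

Lemma NoDup_union_upto M : NoDup (union_upto M).
Proof.
  induction M as [|M IH]; simpl; [constructor|].
  apply NoDup_app; [exact IH|apply NoDup_filter, l_NoDup|].
  intros x Hx Hx'; apply filter_In in Hx' as [_ Hn].
  rewrite (proj2 (memb_true x _) Hx) in Hn; discriminate.
Qed.

(* The list [l M] meets each earlier [l m] at most once, so at most [M] of its
   elements were already counted. *)
Lemma union_upto_length_succ M :
  (length (union_upto M) + length (l M) <= length (union_upto (S M)) + M)%nat.
Proof.
  simpl; rewrite length_app.
  set (fresh x := negb (memb x (union_upto M))).
  rewrite <- (filter_length fresh (l M)).
  enough (length (filter (fun x => negb (fresh x)) (l M)) <= M)%nat by lia.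
  assert (old_spec : forall x, List.In x (filter (fun x => negb (fresh x)) (l M)) ->
      List.In x (l M) /\ List.In x (union_upto M)).
  { intros x Hx; apply filter_In in Hx as [HxM Hx].
    unfold fresh in Hx; rewrite Bool.negb_involutive, memb_true in Hx; tauto. }
  apply (NoDup_length_le_witnesses (fun m x => List.In x (l m))
           (fun m x => in_dec eq_dec x (l m))).
  - apply NoDup_filter, l_NoDup.
  - intros x Hx; apply In_union_upto, old_spec, Hx.
  - intros m x y HmM Hx Hy Hmx Hmy.
    apply (l_meet_once M m); [lia|apply old_spec; exact Hx|exact Hmx|..];
      [apply old_spec; exact Hy|exact Hmy].
Qed.

End Counting.

Lemma Int_part_to_nat_bounds (r : R) :
  0 <= r -> INR (Z.to_nat (Int_part r)) <= r /\ r - 1 < INR (Z.to_nat (Int_part r)).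
Proof.
  intros Hr; destruct (base_Int_part r) as [H1 H2].
  assert (Hp : (-1 < Int_part r)%Z) by (apply lt_IZR; simpl; lra).
  rewrite INR_IZR_INZ, Z2Nat.id by lia; lra.
Qed.

(* About [n / |e|] consecutive points [s + k e] of [[-n, n]]: with
   [k = up (- s / e) + j] the point is [e (t + j)] for some [0 < t <= 1]. *)
Definition progression_window (s e : R) (n : nat) : list R :=
  map (fun j => s + IZR (up (- s / e) + Z.of_nat j) * e)
      (seq 0 (Z.to_nat (Int_part (INR n / Rabs e)))).

Section ProgressionWindow.
Variables (s e : R) (n : nat).
Hypothesis e_neq0 : e <> 0.

Lemma NoDup_progression_window : NoDup (progression_window s e n).
Proof.
  apply NoDup_map_NoDup_ForallPairs; [|apply seq_NoDup].
  intros i j _ _ Hij.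
  assert (Hk : IZR (up (- s / e) + Z.of_nat i) = IZR (up (- s / e) + Z.of_nat j))
    by (apply (Rmult_eq_reg_r e); [lra|exact e_neq0]).
  apply eq_IZR in Hk; lia.
Qed.

Lemma progression_window_length :
  INR n / Rabs e - 1 < INR (length (progression_window s e n)).
Proof.
  unfold progression_window; rewrite length_map, length_seq.
  apply Int_part_to_nat_bounds, Rdiv_le_0_compat; [apply pos_INR|apply Rabs_pos_lt, e_neq0].
Qed.

Lemma In_progression_window x : List.In x (progression_window s e n) ->
  (exists k : Z, x = s + IZR k * e) /\ - INR n <= x <= INR n.
Proof.
  intros Hx; apply in_map_iff in Hx as [j [<- Hj]]; apply in_seq in Hj.
  split; [eexists; reflexivity|].
  set (N := Z.to_nat (Int_part (INR n / Rabs e))) in Hj.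
  set (t := IZR (up (- s / e)) + s / e).
  assert (Ht : 0 < t <= 1) by (destruct (archimed (- s / e)); unfold t; lra).
  assert (He : 0 < Rabs e) by (apply Rabs_pos_lt, e_neq0).
  assert (HN : (INR j + 1) * Rabs e <= INR n).
  { destruct (Int_part_to_nat_bounds (INR n / Rabs e)) as [HNn _];
      [apply Rdiv_le_0_compat; [apply pos_INR|exact He]|].
    assert (Hj1 : INR j + 1 <= INR n / Rabs e).
    { rewrite <- S_INR; apply Rle_trans with (INR N); [apply le_INR; lia|exact HNn]. }
    apply (Rmult_le_compat_r (Rabs e)) in Hj1; [|lra].
    unfold Rdiv in Hj1; rewrite Rmult_assoc, Rinv_l, Rmult_1_r in Hj1; lra. }
  assert (Ex : s + IZR (up (- s / e) + Z.of_nat j) * e = e * (t + INR j)).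
  { rewrite plus_IZR, <- INR_IZR_INZ; unfold t; field; exact e_neq0. }
  rewrite Ex; apply Rabs_le_between.
  rewrite Rabs_mult, (Rabs_pos_eq (t + INR j)) by (pose proof (pos_INR j); lra).
  pose proof (pos_INR j); nra.
Qed.

End ProgressionWindow.

Lemma ln_succ_sub_le (x : R) : 0 < x -> ln (x + 1) - ln x <= / x.
Proof.
  intros Hx; rewrite <- ln_div by lra.
  replace ((x + 1) / x) with (1 + / x) by (field; lra).
  pose proof (exp_ineq1_le (/ x)) as Hexp.
  rewrite <- (ln_exp (/ x)) at 2.
  apply ln_le; [pose proof (Rinv_0_lt_compat x Hx); lra|exact Hexp].
Qed.

Definition window (T : Ensemble R) (n : nat) : Ensemble R :=
  fun t => T t /\ - INR n <= t <= INR n.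

Definition sparse (T : Ensemble R) : Prop :=
  exists c : nat -> nat, (forall n, cardinal R (window T n) (c n)) /\
    is_lim_seq (fun n => INR (c n) / (INR n * ln (INR n))) 0.

(* Evaluate at [n = M^2]: the lower bound is of order [M^2 ln M]. *)
Lemma not_o_nlogn (c : nat -> R) (a : R) : 0 < a ->
  (forall n M : nat, a * (INR n * ln (INR M + 1)) - INR M * INR M <= c n) ->
  ~ is_lim_seq (fun n => c n / (INR n * ln (INR n))) 0.
Proof.
  intros Ha Hlow Hlim; apply is_lim_seq_spec in Hlim.
  destruct (Hlim (mkposreal (a / 4) ltac:(lra))) as [N HN]; simpl in HN.
  destruct (INR_unbounded (Rmax (INR N) (exp (2 / a)))) as [M HM].
  assert (HMN : (N <= M)%nat)
    by (apply Nat.lt_le_incl, INR_lt; pose proof (Rmax_l (INR N) (exp (2 / a))); lra).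
  assert (Hexp : 1 + 2 / a <= exp (2 / a)) by apply exp_ineq1_le.
  assert (Ha2 : 0 < 2 / a) by (apply Rdiv_lt_0_compat; lra).
  assert (HM1 : exp (2 / a) < INR M) by (pose proof (Rmax_r (INR N) (exp (2 / a))); lra).
  assert (HlnM : 2 / a < ln (INR M))
    by (rewrite <- (ln_exp (2 / a)); apply ln_increasing; [apply exp_pos|exact HM1]).
  assert (Hln1 : ln (INR M) <= ln (INR M + 1)) by (apply ln_le; lra).
  specialize (HN (M * M)%nat ltac:(nia)); specialize (Hlow (M * M)%nat M).
  rewrite mult_INR in HN, Hlow; rewrite ln_mult, Rminus_0_r in HN by lra.
  set (L := ln (INR M)) in *; set (c0 := c (M * M)%nat) in *.
  assert (Hpos : 0 < INR M * INR M * (L + L)) by (apply Rmult_lt_0_compat; nra).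
  apply Rabs_lt_between in HN as [_ HN]; apply (Rlt_div_l c0 (a / 4) _ Hpos) in HN.
  assert (HaL : 2 < a * L)
    by (apply (Rmult_lt_compat_l a) in HlnM; [|lra]; field_simplify in HlnM; lra).
  assert (HMM : 0 < INR M * INR M) by nra.
  assert (a * (INR M * INR M * L) - INR M * INR M < a / 4 * (INR M * INR M * (L + L))).
  { apply Rle_lt_trans with c0; [|exact HN].
    apply Rle_trans with (a * (INR M * INR M * ln (INR M + 1)) - INR M * INR M); [|exact Hlow].
    apply Rplus_le_compat_r, Rmult_le_compat_l; [lra|apply Rmult_le_compat_l; lra]. }
  nra.
Qed.

Lemma rational_ratio_of_step_relation (u v : R) (a b : Z) (m m' : nat) :
  v <> 0 -> a <> 0%Z -> m <> m' ->
  IZR a * (u + INR m * v) = IZR b * (u + INR m' * v) -> is_rational (u / v).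
Proof.
  intros Hv Ha Hm Hab.
  destruct (Z.eq_dec a b) as [<-|Hab'].
  - exfalso.
    assert (Hz : IZR a * (INR m - INR m') * v = 0) by lra.
    apply Rmult_integral in Hz as [Hz|Hz]; [|contradiction].
    apply Rmult_integral in Hz as [Hz|Hz]; [apply eq_IZR in Hz; contradiction|].
    apply Hm, INR_eq; lra.
  - replace (u / v) with (IZR (b * Z.of_nat m' - a * Z.of_nat m) / IZR (a - b)).
    + apply rat_div; apply rat_IZR.
    + assert (IZR (a - b) <> 0) by (apply not_0_IZR; lia).
      rewrite minus_IZR, !mult_IZR, <- !INR_IZR_INZ.
      field_simplify_eq; [|split; assumption].
      rewrite minus_IZR in *; lra.
Qed.

Section ProgressionFamily.
Variables (T : Ensemble R) (c : nat -> nat).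
Hypothesis T_window_card : forall n, cardinal R (window T n) (c n).
Variables (s : nat -> R) (u v : R).
Hypothesis v_neq0 : v <> 0.
Hypothesis ratio_irrational : ~ is_rational (u / v).
Hypothesis T_family : forall (m : nat) (k : Z), T (s m + IZR k * (u + INR m * v)).

Let step (m : nat) : R := u + INR m * v.
Let K : R := Rabs u + Rabs v.

Lemma step_neq0 m : step m <> 0.
Proof.
  intros Hm; apply ratio_irrational.
  replace (u / v) with (IZR (- Z.of_nat m) / IZR 1).
  - apply rat_div; apply rat_IZR.
  - unfold step in Hm; rewrite opp_IZR, <- INR_IZR_INZ; field_simplify_eq; lra.
Qed.

Lemma step_abs_le m : Rabs (step m) <= (INR m + 1) * K.
Proof.
  unfold step, K; eapply Rle_trans; [apply Rabs_triang|].
  rewrite Rabs_mult, (Rabs_pos_eq (INR m)) by apply pos_INR.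
  pose proof (pos_INR m); pose proof (Rabs_pos u); pose proof (Rabs_pos v); nra.
Qed.

Let window_list (n m : nat) : list R := progression_window (s m) (step m) n.

(* Two common points of the windows for [m <> m'] would make [step m] and
   [step m'] commensurable. *)
Lemma window_lists_meet_once n m m' x y : m <> m' ->
  List.In x (window_list n m) -> List.In x (window_list n m') ->
  List.In y (window_list n m) -> List.In y (window_list n m') -> x = y.
Proof.
  intros Hm Hx Hx' Hy Hy'.
  destruct (In_progression_window _ _ _ (step_neq0 m) _ Hx) as [[a1 ->] _].
  destruct (In_progression_window _ _ _ (step_neq0 m') _ Hx') as [[b1 Eb1] _].
  destruct (In_progression_window _ _ _ (step_neq0 m) _ Hy) as [[a2 ->] _].
  destruct (In_progression_window _ _ _ (step_neq0 m') _ Hy') as [[b2 Eb2] _].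
  destruct (Z.eq_dec a1 a2) as [<-|Ha]; [reflexivity|exfalso].
  apply ratio_irrational, (rational_ratio_of_step_relation u v (a1 - a2) (b1 - b2) m m');
    [exact v_neq0|lia|exact Hm|].
  rewrite !minus_IZR; unfold step in *; lra.
Qed.

Lemma window_count_lower_bound n M :
  / K * (INR n * ln (INR M + 1)) - INR M * INR M <= INR (c n).
Proof.
  assert (HK : 0 < K)
    by (unfold K; pose proof (Rabs_pos u); pose proof (Rabs_pos_lt v v_neq0); lra).
  apply Rle_trans with (INR (length (union_upto R Req_dec_T (window_list n) M))).
  2:{ apply le_INR, (NoDup_length_le_cardinal _ _ _ _ (T_window_card n)).
      - apply NoDup_union_upto; intros m; apply NoDup_progression_window, step_neq0.
      - intros x Hx.
        destruct (In_union_upto _ _ _ _ _ Hx) as [m [_ Hm]].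
        destruct (In_progression_window _ _ _ (step_neq0 m) _ Hm) as [[k ->] Hb].
        split; [apply T_family|exact Hb]. }
  induction M as [|M IH].
  - simpl; rewrite Rplus_0_l, ln_1; lra.
  - assert (Hstep := union_upto_length_succ R Req_dec_T (window_list n)
      (fun m => NoDup_progression_window _ _ n (step_neq0 m)) (window_lists_meet_once n) M).
    apply le_INR in Hstep; rewrite !plus_INR in Hstep.
    assert (Hlen := progression_window_length (s M) (step M) n (step_neq0 M)).
    assert (HM : 0 < INR M + 1) by (pose proof (pos_INR M); lra).
    assert (Hq : / K * (INR n * (ln (INR M + 1 + 1) - ln (INR M + 1))) <= INR n / Rabs (step M)).
    { assert (Hstep_pos := Rabs_pos_lt _ (step_neq0 M)).
      apply Rle_trans with (/ K * (INR n * / (INR M + 1))).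
      - apply Rmult_le_compat_l; [apply Rlt_le, Rinv_0_lt_compat, HK|].
        apply Rmult_le_compat_l; [apply pos_INR|apply ln_succ_sub_le, HM].
      - replace (/ K * (INR n * / (INR M + 1))) with (INR n / ((INR M + 1) * K)) by (field; lra).
        apply Rmult_le_compat_l; [apply pos_INR|].
        apply Rinv_le_contravar; [exact Hstep_pos|apply step_abs_le]. }
    rewrite S_INR; fold (window_list n M) in Hlen.
    assert (Hsplit : / K * (INR n * ln (INR M + 1 + 1)) =
      / K * (INR n * (ln (INR M + 1 + 1) - ln (INR M + 1))) + / K * (INR n * ln (INR M + 1)))
      by ring.
    pose proof (pos_INR M); lra.
Qed.

End ProgressionFamily.

Lemma sparse_progression_family_ratio_rational (T : Ensemble R) (s : nat -> R) (u v : R) :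
  sparse T -> v <> 0 ->
  (forall (m : nat) (k : Z), T (s m + IZR k * (u + INR m * v))) ->
  is_rational (u / v).
Proof.
  intros [c [Hcard Hlim]] Hv Hfam; apply NNPP; intros Hirr.
  apply (not_o_nlogn (fun n => INR (c n)) (/ (Rabs u + Rabs v))); [|intros n M|exact Hlim].
  - apply Rinv_0_lt_compat; pose proof (Rabs_pos u); pose proof (Rabs_pos_lt v Hv); lra.
  - exact (window_count_lower_bound T c Hcard s u v Hv Hirr Hfam n M).
Qed.

Definition upper_unipotent (k : Z) : Mat2 := mk2 1 (IZR k) 0 1.
Definition lower_unipotent (x : R) (k : Z) : Mat2 := mk2 1 0 (IZR k * x) 1.
Definition mscale (lam : R) (A : Mat2) : Mat2 :=
  mk2 (lam * ma A) (lam * mb A) (lam * mc A) (lam * md A).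

Definition proj_rational (A : Mat2) : Prop :=
  exists (lam : R) (B : Mat2), is_rational (lam * lam) /\ rational_mat B /\ A = mscale lam B.

Lemma rational_mat_mmul (A B : Mat2) :
  rational_mat A -> rational_mat B -> rational_mat (mmul A B).
Proof.
  intros (Ha & Hb & Hc & Hd) (Ha' & Hb' & Hc' & Hd').
  repeat split; apply rat_add; apply rat_mul; assumption.
Qed.

Lemma rational_mat_mscale (lam : R) (A : Mat2) :
  is_rational lam -> rational_mat A -> rational_mat (mscale lam A).
Proof. intros Hl (Ha & Hb & Hc & Hd); repeat split; apply rat_mul; assumption. Qed.

Lemma mmul_mscale (lam mu : R) (A B : Mat2) :
  mmul (mscale lam A) (mscale mu B) = mscale (lam * mu) (mmul A B).
Proof. unfold mmul, mscale; simpl; f_equal; ring. Qed.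

Lemma mmul_mscale_r (lam : R) (A B : Mat2) : mmul A (mscale lam B) = mscale lam (mmul A B).
Proof. unfold mmul, mscale; simpl; f_equal; ring. Qed.

Lemma proj_rational_sq (A : Mat2) : proj_rational A -> rational_mat (mmul A A).
Proof.
  intros (lam & B & Hlam & HB & ->); rewrite mmul_mscale.
  apply rational_mat_mscale; [exact Hlam|apply rational_mat_mmul; exact HB].
Qed.

Lemma proj_rational_mmul_l (B A : Mat2) :
  rational_mat B -> proj_rational A -> proj_rational (mmul B A).
Proof.
  intros HB (lam & A' & Hlam & HA' & ->).
  exists lam, (mmul B A'); split; [exact Hlam|split; [apply rational_mat_mmul; assumption|]].
  apply mmul_mscale_r.
Qed.

(* Scale by [ma A]; its square is rational because [det A = 1]. *)
Lemma proj_rational_of_ratios (A : Mat2) : mdet A = 1 -> ma A <> 0 ->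
  is_rational (mb A / ma A) -> is_rational (mc A / ma A) -> is_rational (md A / ma A) ->
  proj_rational A.
Proof.
  intros Hdet Ha Hb Hc Hd.
  exists (ma A), (mk2 1 (mb A / ma A) (mc A / ma A) (md A / ma A)).
  split; [|split; [repeat split; [apply rat_IZR|assumption..]|]].
  - replace (ma A * ma A) with (/ (md A / ma A - mb A / ma A * (mc A / ma A))).
    + apply rat_inv, rat_sub; [exact Hd|apply rat_mul; assumption].
    + replace (md A / ma A - mb A / ma A * (mc A / ma A)) with (mdet A / (ma A * ma A))
        by (unfold mdet; field; exact Ha).
      rewrite Hdet; field; exact Ha.
  - destruct A; unfold mscale; simpl in *; f_equal; field; exact Ha.
Qed.

Lemma exists_shift_neq0 (a b : R) : a <> 0 -> exists m : Z, m <> 0%Z /\ a + IZR m * b <> 0.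
Proof.
  intros Ha; destruct (Req_dec (a + IZR 1 * b) 0) as [Hab|Hab].
  - exists 2%Z; split; [lia|simpl in *; lra].
  - exists 1%Z; split; [lia|exact Hab].
Qed.

Section TraceRationality.
Variables (G : Mat2 -> Prop) (x : R).
Hypothesis G_mul : forall g h, G g -> G h -> G (mmul g h).
Hypothesis G_det : forall g, G g -> mdet g = 1.
Hypothesis G_upper : forall k, G (upper_unipotent k).
Hypothesis G_lower : forall k, G (lower_unipotent x k).
Hypothesis x_neq0 : x <> 0.
Hypothesis G_sparse : sparse (TrSet G).

(* [tr (T^k L^m A)] is affine in [k] with slope [mc A + m x ma A]. *)
Lemma trace_ratio_lower_left A : G A -> ma A <> 0 -> is_rational (mc A / (x * ma A)).
Proof.
  intros HA Ha.
  apply (sparse_progression_family_ratio_rational (TrSet G)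
           (fun m => ma A + md A + INR m * x * mb A));
    [exact G_sparse|apply Rmult_integral_contrapositive; split; assumption|intros m k].
  exists (mmul (upper_unipotent k) (mmul (lower_unipotent x (Z.of_nat m)) A)); split.
  - apply G_mul; [apply G_upper|apply G_mul; [apply G_lower|exact HA]].
  - unfold mtr, mmul, upper_unipotent, lower_unipotent; simpl; rewrite <- INR_IZR_INZ; ring.
Qed.

(* [tr (L^k A T^m)] is affine in [k] with slope [x (mb A + m ma A)]. *)
Lemma trace_ratio_upper_right A : G A -> ma A <> 0 -> is_rational (mb A / ma A).
Proof.
  intros HA Ha.
  replace (mb A / ma A) with (x * mb A / (x * ma A)) by (field; split; assumption).
  apply (sparse_progression_family_ratio_rational (TrSet G)
           (fun m => ma A + md A + INR m * mc A));
    [exact G_sparse|apply Rmult_integral_contrapositive; split; assumption|intros m k].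
  exists (mmul (lower_unipotent x k) (mmul A (upper_unipotent (Z.of_nat m)))); split.
  - apply G_mul; [apply G_lower|apply G_mul; [exact HA|apply G_upper]].
  - unfold mtr, mmul, upper_unipotent, lower_unipotent; simpl; rewrite <- INR_IZR_INZ; ring.
Qed.

Lemma x_rational : is_rational x.
Proof.
  destruct (exists_shift_neq0 1 x) as [k [Hk Hkx]]; [lra|].
  set (B := mmul (upper_unipotent k) (lower_unipotent x 1)).
  assert (HaB : ma B = 1 + IZR k * x) by (unfold B, mmul; simpl; ring).
  assert (HcB : mc B = x) by (unfold B, mmul; simpl; ring).
  assert (Hr := trace_ratio_lower_left B
    ltac:(apply G_mul; [apply G_upper|apply G_lower]) ltac:(rewrite HaB; exact Hkx)).
  rewrite HaB, HcB in Hr.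
  replace x with ((/ (x / (x * (1 + IZR k * x))) - 1) / IZR k).
  - apply rat_div; [apply rat_sub; [apply rat_inv, Hr|apply rat_IZR]|apply rat_IZR].
  - field; repeat split; [exact Hkx|exact x_neq0|apply not_0_IZR, Hk].
Qed.

Lemma ratio_lower_left A : G A -> ma A <> 0 -> is_rational (mc A / ma A).
Proof.
  intros HA Ha.
  replace (mc A / ma A) with (mc A / (x * ma A) * x) by (field; split; assumption).
  apply rat_mul; [apply trace_ratio_lower_left; assumption|exact x_rational].
Qed.

(* Apply the previous ratios to [A L^m], whose lower-left entry involves [md A]. *)
Lemma ratio_lower_right A : G A -> ma A <> 0 -> is_rational (md A / ma A).
Proof.
  intros HA Ha.
  destruct (exists_shift_neq0 (ma A) (x * mb A) Ha) as [m [Hm Hma]].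
  set (A' := mmul A (lower_unipotent x m)).
  assert (Ha' : ma A' = ma A + IZR m * (x * mb A)) by (unfold A', mmul; simpl; ring).
  assert (Hc' : mc A' = mc A + IZR m * x * md A) by (unfold A', mmul; simpl; ring).
  assert (Hr := trace_ratio_lower_left A'
    ltac:(apply G_mul; [exact HA|apply G_lower]) ltac:(rewrite Ha'; exact Hma)).
  rewrite Ha', Hc' in Hr.
  replace (md A / ma A) with
    (((mc A + IZR m * x * md A) / (x * (ma A + IZR m * (x * mb A)))
        * (1 + IZR m * x * (mb A / ma A)) - mc A / (x * ma A)) / IZR m).
  - apply rat_div; [|apply rat_IZR].
    apply rat_sub; [apply rat_mul; [exact Hr|]|apply trace_ratio_lower_left; assumption].
    apply rat_add; [apply rat_IZR|].
    apply rat_mul; [apply rat_mul; [apply rat_IZR|exact x_rational]|].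
    apply trace_ratio_upper_right; assumption.
  - field; repeat split; assumption || apply not_0_IZR, Hm.
Qed.

Lemma proj_rational_of_ma_neq0 A : G A -> ma A <> 0 -> proj_rational A.
Proof.
  intros HA Ha; apply proj_rational_of_ratios; [apply G_det, HA|exact Ha|..].
  - apply trace_ratio_upper_right; assumption.
  - apply ratio_lower_left; assumption.
  - apply ratio_lower_right; assumption.
Qed.

(* If [ma A = 0] then [mc A <> 0], so [T A] has a nonzero upper-left entry. *)
Lemma proj_rational_of_G A : G A -> proj_rational A.
Proof.
  intros HA; destruct (Req_dec (ma A) 0) as [Ha|Ha]; [|apply proj_rational_of_ma_neq0; assumption].
  assert (Hc : mc A <> 0) by (intros Hc; assert (Hdet := G_det A HA); unfold mdet in Hdet; nra).
  replace A with (mmul (upper_unipotent (-1)) (mmul (upper_unipotent 1) A))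
    by (destruct A; unfold mmul, upper_unipotent; simpl; f_equal; ring).
  apply proj_rational_mmul_l.
  - repeat split; apply rat_IZR.
  - apply proj_rational_of_ma_neq0; [apply G_mul; [apply G_upper|exact HA]|].
    unfold mmul, upper_unipotent; simpl; rewrite Ha; lra.
Qed.

End TraceRationality.

Theorem lemma4p1 (G : Mat2 -> Prop) (beta : R) :
  fuchsian_preimage G ->
  beta <> 0 ->
  (forall g, G g -> (fixes_inf g <-> Gamma_inf g)) ->
  (forall g, Gamma_inf g -> G g) ->
  (forall g, G g -> (fixes_zero g <-> Gamma_zero beta g)) ->
  (forall g, Gamma_zero beta g -> G g) ->
  (exists c : nat -> nat,
     (forall n, cardinal R (trace_window G n) (c n)) /\
     is_lim_seq (fun n => INR (c n) / (INR n * ln (INR n))) 0) ->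
  forall A, G A ->
    exists s : Mat2, (s = mmul A A \/ s = mopp (mmul A A)) /\ rational_mat s.
Proof.
  intros (G_det & _ & G_mul & _) Hbeta _ G_inf _ G_zero G_sparse A HA.
  exists (mmul A A); split; [left; reflexivity|].
  apply proj_rational_sq, (proj_rational_of_G G (beta ^ 2)); try assumption.
  - intros k; apply G_inf; exists k; left; reflexivity.
  - intros k; apply G_zero; exists k; left; reflexivity.
  - apply pow_nonzero, Hbeta.
Qed.
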